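(* Let $E$ be a nonzero real Banach space, let $K$ be a nonempty $w(E,E^* )$-compact convex subset of $E$, and let $\mathbb I_K$ be its indicator function ($0$ on $K$, $\infty$ off $K$). Then for all $(y^*,y^{**})\in E^*\times E^{**}$: $(y^*,y^{**})\in G\big((\partial\mathbb I_K)^{\mathbb F}\big)$ if and only if $y^{**}\in\widehat K$ and $\langle y^*,y^{**}\rangle=\sup_{x\in K}\langle x,y^*\rangle$.
   Context: $\widehat x\in E^{**}$ denotes the canonical image of $x\in E$ ($\langle x^*,\widehat x\rangle=\langle x,x^*\rangle$) and $\widehat K=\{\widehat x:x\in K\}$. For proper convex lsc $f$ on $E$, $x^*\in\partial f(x)$ iff $f(x)+f^*(x^* )=\langle x,x^*\rangle$; $\partial\mathbb I_K$ is closed, monotone and quasidense. For a multifunction $S\colon E\rightrightarrows E^*$ with nonempty graph $G(S)$: closed means $G(S)$ norm-closed; monotone means $\langle s-t,s^*-t^*\rangle\ge0$ on $G(S)$; quasidense means for every $(x,x^* )$, $\inf_{(s,s^* )\in G(S)}[\tfrac12\|s-x\|^2+\tfrac12\|s^*-x^*\|^2+\langle s-x,s^*-x^*\rangle]\le0$. Let $\varphi_S(x,x^* )=\sup_{(s,s^* )\in G(S)}[\langle s,x^*\rangle+\langle x,s^*\rangle-\langle s,s^*\rangle]$ and $\varphi_S^*$ its conjugate on $E^*\times E^{**}$ under $\langle (x,x^* ),(y^*,y^{**})\rangle=\langle x,y^*\rangle+\langle x^*,y^{**}\rangle$. For $S$ closed, monotone, quasidense, the Fitzpatrick extension $S^{\mathbb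 F}\colon E^*\rightrightarrows E^{**}$ is given by $(y^*,y^{**})\in G(S^{\mathbb F})$ iff $\varphi_S^*(y^*,y^{**})=\langle y^*,y^{**}\rangle$. *)

From HB Require Import structures.
From mathcomp Require Import all_boot all_order all_algebra.
From mathcomp Require Import all_classical all_reals all_analysis.
Set Implicit Arguments.
Unset Strict Implicit.
Unset Printing Implicit Defensive.
Import Order.TTheory GRing.Theory Num.Theory.
Import numFieldNormedType.Exports.
Local Open Scope classical_set_scope.
Local Open Scope ring_scope.

Section Duality.
Variables (R : realType) (E : normedModType R).

Record dual := Dual {
  dual_fun :> E -> R ;
  dual_linear : forall (a : R) (x y : E), dual_fun (a *: x + y) = a * dual_fun x + dual_fun y ;
  dual_cont : continuous dual_fun }.

Definition dual_norm (f : dual) : R :=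
  sup [set `|f x| | x in [set x : E | `|x| <= 1]].

Record bidual := Bidual {
  bidual_fun :> dual -> R ;
  bidual_linear : forall (a : R) (f g h : dual),
     (forall x, h x = a * f x + g x) -> bidual_fun h = a * bidual_fun f + bidual_fun g ;
  bidual_bounded : exists M : R, forall f : dual, `|bidual_fun f| <= M * dual_norm f }.

Definition in_hat (K : set E) (yss : bidual) : Prop :=
  exists2 x, K x & forall f : dual, yss f = f x.

(* the weak topology w(E,E^* ): initial topology of x |-> (f |-> f x),
   with the product (pointwise) topology on E^* -> R *)
Definition weak_eval (x : E) : {ptws dual -> R} := fun f : dual => f x.
Definition weakE := initial_topology weak_eval.
Definition weakly_compact (K : set E) : Prop := @compact weakE K.

Definition convex_set_of (K : set E) : Prop :=
  forall x y, K x -> K y -> forall t : R, 0 <= t <= 1 -> K (t *: x + (1 - t) *: y).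

Definition indicator (K : set E) (x : E) : \bar R :=
  if `[< K x >] then 0%E else +oo%E.

Definition subdiff (f : E -> \bar R) (x : E) (xs : dual) : Prop :=
  f x \is a fin_num /\ forall y : E, (f x + (xs y - xs x)%:E <= f y)%E.

Definition fitz_phi (S : E -> dual -> Prop) (x : E) (xs : dual) : \bar R :=
  ereal_sup [set r | exists (s : E) (ss : dual), S s ss /\ r = (xs s + ss x - ss s)%:E].

Definition fitz_phi_conj (S : E -> dual -> Prop) (ys : dual) (yss : bidual) : \bar R :=
  ereal_sup [set r | exists (x : E) (xs : dual),
                       r = ((ys x + yss xs)%:E - fitz_phi S x xs)%E].

Definition fitz_ext (S : E -> dual -> Prop) (ys : dual) (yss : bidual) : Prop :=
  fitz_phi_conj S ys yss = (yss ys)%:E.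

End Duality.

(* Backward direction: if yss = x0^ with x0 maximizing ys on K, then (x0, ys)
   lies in the graph of the subdifferential and computes the conjugate exactly.
   Forward direction: testing the conjugate at (x0, t xi) with x0 in K a
   maximizer of xi on K gives yss xi <= xi x0.  For finitely many functionals
   f_1 .. f_n, let x0 minimize sum_i (f_i x - yss f_i)^2 over the weakly
   compact convex K; the first-order condition makes
   xi = sum_i (yss f_i - f_i x0) f_i maximal on K at x0, and yss xi <= xi x0
   reads sum_i (f_i x0 - yss f_i)^2 <= 0.  So yss agrees with a point of K on
   every finite set of functionals, and weak compactness (finite intersection
   property) yields x0 in K with yss = x0^. *)
From HB Require Import structures.
From mathcomp Require Import all_boot all_order all_algebra.
From mathcomp Require Import all_classical all_reals all_analysis.
From mathcomp Require Import ring lra.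
Import Order.TTheory GRing.Theory Num.Theory.
Import numFieldNormedType.Exports.
Set Implicit Arguments.
Unset Strict Implicit.
Unset Printing Implicit Defensive.
Local Open Scope classical_set_scope.
Local Open Scope ring_scope.

Section DualAlgebra.
Variables (R : realType) (E : normedModType R).

HB.instance Definition _ := gen_eqMixin (dual E).
HB.instance Definition _ := gen_choiceMixin (dual E).

Lemma dual_fun0 (f : dual E) : f 0 = 0.
Proof.
have := dual_linear f 1 0 0; rewrite scale1r addr0 mul1r => f00.
by apply: (addrI (f 0)); rewrite -f00 addr0.
Qed.

Lemma dual_funZD (f : dual E) (a b : R) (x y : E) :
  f (a *: x + b *: y) = a * f x + b * f y.
Proof.
rewrite dual_linear; congr (_ + _).
by have := dual_linear f b y 0; rewrite !addr0 dual_fun0 addr0.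
Qed.

Lemma dual_weak_continuous (f : dual E) : continuous (fun x : weakE E => f x).
Proof.
move=> x; exact: (continuous_comp (@initial_continuous _ _ (@weak_eval R E) x)
  (@proj_continuous (dual E) (fun=> R) f _)).
Qed.

Section LinearCombination.
Variables (l : seq (dual E)) (c : dual E -> R).

Definition dual_lincomb_fun (x : E) : R := \sum_(f <- l) c f * f x.

Lemma dual_lincomb_linear (a : R) (x y : E) :
  dual_lincomb_fun (a *: x + y) = a * dual_lincomb_fun x + dual_lincomb_fun y.
Proof.
rewrite /dual_lincomb_fun mulr_sumr -big_split /=.
by apply: eq_bigr => f _; rewrite dual_linear; ring.
Qed.

Lemma dual_lincomb_continuous : continuous dual_lincomb_fun.
Proof.
apply: continuous_big => [|f _ x]; first exact: add_continuous.
by apply: continuousM; [exact: cst_continuous | exact: dual_cont].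
Qed.

Definition dual_lincomb : dual E :=
  Dual dual_lincomb_linear dual_lincomb_continuous.

Lemma dual_lincombE x : dual_lincomb x = \sum_(f <- l) c f * f x.
Proof. by []. Qed.

End LinearCombination.

Lemma bidual_lincomb (yss : bidual E) l c :
  yss (dual_lincomb l c) = \sum_(f <- l) c f * yss f.
Proof.
elim: l => [|f l IHl].
  rewrite big_nil; set z := dual_lincomb [::] c.
  have := bidual_linear yss (a := -1) (f := z) (g := z) (h := z).
  by rewrite mulN1r addNr; apply=> x; rewrite !dual_lincombE big_nil; ring.
rewrite big_cons -IHl; apply: bidual_linear => x.
by rewrite !dual_lincombE big_cons.
Qed.

Definition dual_zero : dual E := dual_lincomb [::] (fun=> 0).

Lemma dual_zeroE x : dual_zero x = 0.
Proof. by rewrite dual_lincombE big_nil. Qed.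

Lemma bidual_zero (yss : bidual E) : yss dual_zero = 0.
Proof. by rewrite bidual_lincomb big_nil. Qed.

End DualAlgebra.

Lemma ler0_of_bounded_multiples (R : realFieldType) (d C : R) :
  (forall t, 0 <= t -> t * d <= C) -> d <= 0.
Proof.
move=> bounded; rewrite leNgt; apply/negP => d_gt0.
have := bounded ((`|C| + 1) / d) (divr_ge0 (addr_ge0 (normr_ge0 _) ler01) (ltW d_gt0)).
by rewrite divfK ?gt_eqF //; have := ler_norm C; lra.
Qed.

Section IndicatorSubdifferential.
Variables (R : realType) (E : normedModType R) (K : set E).

Local Notation S := (subdiff (indicator K)).

Lemma subdiff_indicatorP s (ss : dual E) :
  S s ss <-> K s /\ forall y, K y -> ss y <= ss s.
Proof.
rewrite /subdiff /indicator; split.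
- have [Ks|nKs] := pselect (K s); last by rewrite (asboolF nKs) => -[].
  rewrite (asboolT Ks) => -[_ sub]; split=> // y Ky.
  by have := sub y; rewrite asboolT // add0e lee_fin subr_le0.
- move=> [Ks ss_max]; rewrite asboolT //; split=> // y; rewrite add0e.
  have [Ky|nKy] := pselect (K y); last by rewrite asboolF // leey.
  by rewrite asboolT // lee_fin subr_le0; exact: ss_max.
Qed.

Lemma fitz_phi_indicator_le x (xs : dual E) (c : R) :
  K x -> (forall s, K s -> xs s <= c) -> (fitz_phi S x xs <= c%:E)%E.
Proof.
move=> Kx xs_le; apply: ub_ereal_sup => _ [s [ss [/subdiff_indicatorP[Ks ss_max] ->]]].
by rewrite lee_fin; have := xs_le s Ks; have := ss_max x Kx; lra.
Qed.

Lemma fitz_ext_indicator_le (ys : dual E) (yss : bidual E) x (xs : dual E) (c : R) :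
  fitz_ext S ys yss -> K x -> (forall s, K s -> xs s <= c) ->
  ys x + yss xs <= yss ys + c.
Proof.
move=> ext Kx xs_le.
have conj_ge : ((ys x + yss xs)%:E - fitz_phi S x xs <= (yss ys)%:E)%E.
  by rewrite -ext; apply: ereal_sup_ubound; exists x, xs.
have := le_trans (leeB (lexx _) (fitz_phi_indicator_le Kx xs_le)) conj_ge.
by rewrite lee_fin; lra.
Qed.

Lemma fitz_ext_indicator_ubound (ys : dual E) (yss : bidual E) x :
  fitz_ext S ys yss -> K x -> ys x <= yss ys.
Proof.
move=> ext Kx; have zero_le0 s : K s -> dual_zero E s <= 0 by rewrite dual_zeroE.
by have := fitz_ext_indicator_le ext Kx zero_le0; rewrite bidual_zero !addr0.
Qed.

(* Evaluating the conjugate at (x0, t xi) bounds t (yss xi - xi x0) by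
   yss ys - ys x0 uniformly in t >= 0. *)
Lemma bidual_le_max (ys : dual E) (yss : bidual E) x0 (xi : dual E) :
  fitz_ext S ys yss -> K x0 -> (forall s, K s -> xi s <= xi x0) ->
  yss xi <= xi x0.
Proof.
move=> ext Kx0 xi_max; rewrite -subr_le0.
apply: (@ler0_of_bounded_multiples _ _ (yss ys - ys x0)) => t t_ge0.
have xi_scaled_max s : K s -> dual_lincomb [:: xi] (fun=> t) s <= t * xi x0.
  by move=> Ks; rewrite dual_lincombE big_seq1 ler_wpM2l ?xi_max.
have := fitz_ext_indicator_le ext Kx0 xi_scaled_max.
by rewrite bidual_lincomb big_seq1; lra.
Qed.

Lemma fitz_ext_indicator_of_hat (ys : dual E) (yss : bidual E) :
  in_hat K yss -> (yss ys)%:E = ereal_sup [set (ys x)%:E | x in K] ->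
  fitz_ext S ys yss.
Proof.
move=> [x0 Kx0 yssE] ys_sup.
have ys_max x : K x -> ys x <= ys x0.
  by move=> Kx; rewrite -lee_fin -yssE ys_sup; apply: ereal_sup_ubound; exists x.
have Sx0 : S x0 ys by apply/subdiff_indicatorP.
rewrite /fitz_ext yssE; apply: le_anti; apply/andP; split.
- apply: ub_ereal_sup => _ [x [xs ->]]; rewrite yssE.
  have phi_ge : ((xs x0 + ys x - ys x0)%:E <= fitz_phi S x xs)%E.
    by apply: ereal_sup_ubound; exists x0, ys.
  by apply: le_trans (leeB (lexx _) phi_ge) _; rewrite lee_fin; lra.
- have phi0 : (fitz_phi S x0 (dual_zero E) <= 0%:E)%E.
    by apply: fitz_phi_indicator_le => // s _; rewrite dual_zeroE.
  have conj_ge : ((ys x0 + yss (dual_zero E))%:E - fitz_phi S x0 (dual_zero E)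
                  <= fitz_phi_conj S ys yss)%E.
    by apply: ereal_sup_ubound; exists x0, (dual_zero E).
  apply: le_trans conj_ge; rewrite bidual_zero addr0.
  by have := leeB (lexx (ys x0)%:E) phi0; rewrite sube0.
Qed.

End IndicatorSubdifferential.

Lemma ge0_slope_of_quadratic_ge0 (R : realFieldType) (A B : R) : 0 <= B ->
  (forall t, 0 <= t <= 1 -> 0 <= t * (2 * A + t * B)) -> 0 <= A.
Proof.
move=> B_ge0 quad_ge0; rewrite leNgt; apply/negP => A_lt0.
pose t := - A / (B - 2 * A).
have D_gt0 : 0 < B - 2 * A by lra.
have tD : t * (B - 2 * A) = - A by rewrite /t divfK ?gt_eqF.
have t_gt0 : 0 < t by rewrite /t divr_gt0 // oppr_gt0.
have t_le1 : t <= 1 by rewrite -(ler_pM2r D_gt0) tD mul1r; lra.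
have := quad_ge0 t; rewrite ltW //= t_le1 => /(_ isT).
have -> : 2 * A + t * B = A * (1 + 2 * t) by move: tD; lra.
by rewrite pmulr_rge0 // nmulr_rge0 //; lra.
Qed.

Section SquaredDistance.
Variables (R : realType) (E : normedModType R) (yss : bidual E) (l : seq (dual E)).

Definition bidual_sqdist (x : E) : R := \sum_(f <- l) (f x - yss f) ^+ 2.

Lemma bidual_sqdist_weak_continuous :
  continuous (fun x : weakE E => bidual_sqdist x).
Proof.
rewrite /bidual_sqdist; apply: continuous_big => [|f _ x]; first exact: add_continuous.
have f_cont : {for x, continuous (fun y : weakE E => f y - yss f)}.
  by apply: continuousD; [exact: dual_weak_continuous | exact: cst_continuous].
exact: (continuousM f_cont f_cont).
Qed.

Lemma bidual_sqdist_segment (t : R) x x0 :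
  bidual_sqdist (t *: x + (1 - t) *: x0) = bidual_sqdist x0 +
    t * (2 * \sum_(f <- l) (f x0 - yss f) * (f x - f x0)
         + t * \sum_(f <- l) (f x - f x0) ^+ 2).
Proof.
rewrite /bidual_sqdist mulrDr !mulr_sumr -!big_split /=.
by apply: eq_bigr => f _; rewrite dual_funZD; ring.
Qed.

Lemma bidual_sqdist_min_variational (K : set E) x0 :
  convex_set_of K -> K x0 -> (forall x, K x -> bidual_sqdist x0 <= bidual_sqdist x) ->
  forall x, K x -> 0 <= \sum_(f <- l) (f x0 - yss f) * (f x - f x0).
Proof.
move=> K_convex Kx0 x0_min x Kx.
apply: (ge0_slope_of_quadratic_ge0 (B := \sum_(f <- l) (f x - f x0) ^+ 2)).
  by apply: sumr_ge0 => f _; exact: sqr_ge0.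
move=> t t01; rewrite -(lerD2l (bidual_sqdist x0)) addr0 -bidual_sqdist_segment.
exact/x0_min/K_convex.
Qed.

End SquaredDistance.

Section WeaklyCompactConvex.
Variables (R : realType) (E : normedModType R) (K : set E).
Hypotheses (K_ne : K !=set0) (K_convex : convex_set_of K)
  (K_wcompact : weakly_compact K).
Variables (ys : dual E) (yss : bidual E).
Hypothesis ext : fitz_ext (subdiff (indicator K)) ys yss.

Lemma bidual_agrees_on_seq (l : seq (dual E)) :
  exists2 x0, K x0 & forall f, f \in l -> f x0 = yss f.
Proof.
have [x0 /set_mem Kx0 x0_min] := @compact_EVT_min (weakE E) R _ K K_ne K_wcompact
  (continuous_subspaceT (@bidual_sqdist_weak_continuous _ _ yss l)).
have x0_min' x : K x -> bidual_sqdist yss l x0 <= bidual_sqdist yss l x.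
  by move=> Kx; apply: x0_min; exact: mem_set.
pose c (f : dual E) := f x0 - yss f.
pose xi := dual_lincomb l (fun f => - c f).
have xi_max s : K s -> xi s <= xi x0.
  move=> Ks; rewrite -subr_le0 !dual_lincombE -sumrB.
  have := bidual_sqdist_min_variational K_convex Kx0 x0_min' Ks.
  rewrite -oppr_le0 -sumrN; congr (_ <= _); apply: eq_bigr => f _; rewrite /c; ring.
have := bidual_le_max ext Kx0 xi_max.
rewrite bidual_lincomb dual_lincombE -subr_ge0 -sumrB.
have -> : \sum_(f <- l) (- c f * f x0 - - c f * yss f) = - \sum_(f <- l) c f ^+ 2.
  by rewrite -sumrN; apply: eq_bigr => f _; rewrite /c; ring.
rewrite oppr_ge0 => sq_le0.
have /eqP : \sum_(f <- l) c f ^+ 2 = 0.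
  by apply/le_anti; rewrite sq_le0 sumr_ge0 // => f _; exact: sqr_ge0.
rewrite psumr_eq0 => [/allP c0|f _]; last exact: sqr_ge0.
by exists x0 => // f /c0; rewrite sqrf_eq0 subr_eq0 => /eqP.
Qed.

Lemma in_hat_of_fitz_ext : in_hat K yss.
Proof.
have := K_wcompact; rewrite /weakly_compact compact_In0.
move=> /(_ (dual E) setT (fun f : dual E => K `&` [set x : weakE E | f x = yss f])) [].
- exists (fun f : dual E => [set x : weakE E | f x = yss f]) => // f _.
  apply: (@preimage_closed _ _ (fun x : weakE E => f x) [set yss f]).
    by move=> x _; exact: dual_weak_continuous.
  exact/accessible_closed_set1/hausdorff_accessible/Rhausdorff.
- move=> D _; have [x0 Kx0 x0E] := bidual_agrees_on_seq (finmap.enum_fset D).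
  by exists x0 => f /= fD; split => //; apply: x0E.
- move=> x0 x0E; have [Kx0 _] := x0E (dual_zero E) I.
  by exists x0 => // f; have [_ ->] := x0E f I.
Qed.

End WeaklyCompactConvex.

Theorem theorem3p9 (R : realType) (E : completeNormedModType R)
  (E_nonzero : exists x : E, x != 0)
  (K : set E) (K_ne : K !=set0) (K_convex : convex_set_of K)
  (K_wcompact : weakly_compact K) :
  forall (ys : dual E) (yss : bidual E),
    fitz_ext (subdiff (indicator K)) ys yss <->
    (in_hat K yss /\ (yss ys)%:E = ereal_sup [set (ys x)%:E | x in K]).
Proof.
move=> ys yss; split; last by case; exact: fitz_ext_indicator_of_hat.
move=> ext; have [x0 Kx0 yssE] := in_hat_of_fitz_ext K_ne K_convex K_wcompact ext.
split; first by exists x0.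
apply: le_anti; apply/andP; split.
- by rewrite yssE; apply: ereal_sup_ubound; exists x0.
- apply: ub_ereal_sup => _ [x Kx <-]; rewrite lee_fin.
  exact: fitz_ext_indicator_ubound ext Kx.
Qed.
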